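(* Let $\varphi:\Lambda\to\Gamma$ be a regular covering map of finite simplicial graphs, let $v$ be a vertex of $\Gamma$, $[v]_\varphi$ its $\varphi$-equivalence class, and $\gamma_v$ any permutation of $[v]_\varphi$. Then the map $\gamma$ of $V\Gamma$ defined by $\gamma(w)=\gamma_v(w)$ for $w\in[v]_\varphi$ and $\gamma(w)=w$ otherwise is a graph symmetry of $\Gamma$ which is liftable.
   Context: Graphs are finite simplicial graphs; $\mathrm{lk}(x)$ is the subgraph induced by neighbours of $x$, $\mathrm{st}(x)$ induced by $\mathrm{lk}(x)\cup\{x\}$. $A_\Gamma$ is the right-angled Artin group with generators $V\Gamma$ and relations $[a,b]=1$ for edges; a graph symmetry is regarded as an automorphism of $A_\Gamma$ permuting generators. A covering map $\varphi:\Lambda\to\Gamma$ is a surjective simplicial map mapping the neighbours of each vertex $u$ bijectively onto the neighbours of $\varphi(u)$; regular means the group of graph automorphisms $\mu$ of $\Lambda$ with $\varphi\mu=\varphi$ acts transitively on each fiber. $\phi:A_\Lambda\to A_\Gamma$ is induced by $\varphi$; $f\in\mathrm{Aut}(A_\Gamma)$ is liftable if there is $F\in\mathrm{Aut}(A_\Lambda)$ with $f\circ\phi=\phi\circ F$. For vertices $x,y$ of $\Gamma$, $x\lesssim_\varphi y$ means: for every $u\in\varphi^{-1}(x)$ there is $u'\in\varphi^{-1}(y)$ with $\mathrm{lk}(u)\subseteq\mathrm{st}(u')$; $x,y$ are $\varphi$-equivalent if $x\lesssim_\varphi y$ and $y\lesssim_\varphi x$, and $[v]_\varphi$ is the set of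 vertices $\varphi$-equivalent to $v$. *)

From Stdlib Require Import Relation_Operators.
From mathcomp Require Import all_boot.
From mathcomp Require Import fingroup perm.
Set Implicit Arguments. Unset Strict Implicit. Unset Printing Implicit Defensive.

Definition simple_graph (T : finType) (e : rel T) : Prop := symmetric e /\ irreflexive e.

Definition graph_sym (T : finType) (e : rel T) (g : T -> T) : Prop :=
  bijective g /\ forall x y, e (g x) (g y) = e x y.

(* covering map: surjective simplicial map, bijective on neighbourhoods *)
Definition covering (TL TG : finType) (eL : rel TL) (eG : rel TG) (phi : TL -> TG) : Prop :=
  [/\ (forall x : TG, exists u : TL, phi u = x),
      (forall u w, eL u w -> eG (phi u) (phi w)),
      (forall u w1 w2, eL u w1 -> eL u w2 -> phi w1 = phi w2 -> w1 = w2) &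
      (forall u y, eG (phi u) y -> exists2 w, eL u w & phi w = y)].

(* regular: deck group acts transitively on each fiber *)
Definition regular_covering (TL TG : finType) (eL : rel TL) (phi : TL -> TG) : Prop :=
  forall u u', phi u = phi u' ->
    exists mu : TL -> TL, [/\ graph_sym eL mu, (forall x, phi (mu x) = phi x) & mu u = u'].

(* x <~_phi y : every lift u of x has a lift u' of y with lk(u) \subset st(u') *)
Definition phi_le (TL TG : finType) (eL : rel TL) (phi : TL -> TG) (x y : TG) : bool :=
  [forall u, (phi u == x) ==>
     [exists u', (phi u' == y) && [forall w, eL u w ==> (w == u') || eL u' w]]].

Definition phi_equiv (TL TG : finType) (eL : rel TL) (phi : TL -> TG) (x y : TG) : bool :=
  phi_le eL phi x y && phi_le eL phi y x.

Notation phi_class eL phi v := (sig (fun w => is_true (phi_equiv eL phi v w))).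

Definition extend_perm (TL TG : finType) (eL : rel TL) (phi : TL -> TG) (v : TG)
  (gv : {perm phi_class eL phi v}) (w : TG) : TG :=
  match insub w : option (phi_class eL phi v) with
  | Some x => val (gv x)
  | None => w
  end.

(* a letter (x, true) is the generator x, (x, false) its inverse *)
Definition word (T : Type) := seq (T * bool).

Inductive raag_step (T : Type) (e : T -> T -> bool) : word T -> word T -> Prop :=
| rs_free (u w : word T) (x : T) (b : bool) :
    raag_step e (u ++ (x, b) :: (x, ~~ b) :: w) (u ++ w)
| rs_comm (u w : word T) (x y : T) (b c : bool) :
    e x y -> raag_step e (u ++ (x, b) :: (y, c) :: w) (u ++ (y, c) :: (x, b) :: w).

Definition raag_eq (T : Type) (e : T -> T -> bool) : word T -> word T -> Prop :=
  clos_refl_sym_trans _ (raag_step e).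

Definition winv (T : Type) (w : word T) : word T := rev (map (fun p => (p.1, ~~ p.2)) w).

Definition wsubst (S T : Type) (f : S -> word T) (w : word S) : word T :=
  flatten (map (fun p => if p.2 then f p.1 else winv (f p.1)) w).

(* an assignment of generators defines a homomorphism A_S -> A_T *)
Definition is_hom (S T : Type) (eS : S -> S -> bool) (eT : T -> T -> bool) (f : S -> word T) : Prop :=
  forall a b, eS a b -> raag_eq eT (f a ++ f b) (f b ++ f a).

Definition is_raag_aut (T : Type) (e : T -> T -> bool) (F : T -> word T) : Prop :=
  is_hom e e F /\
  exists G : T -> word T, is_hom e e G /\
    forall a, raag_eq e (wsubst G (F a)) [:: (a, true)] /\
              raag_eq e (wsubst F (G a)) [:: (a, true)].

Definition induced_hom (TL TG : Type) (phi : TL -> TG) (u : TL) : word TG := [:: (phi u, true)].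

Definition sym_aut (T : Type) (g : T -> T) (a : T) : word T := [:: (g a, true)].

Definition liftable (TL TG : Type) (eL : TL -> TL -> bool) (eG : TG -> TG -> bool)
  (phi : TL -> TG) (f : TG -> word TG) : Prop :=
  exists F : TL -> word TL, is_raag_aut eL F /\
    forall u, raag_eq eG (wsubst f (induced_hom phi u)) (wsubst (induced_hom phi) (F u)).

(* Vertices that are phi-equivalent are twins in Gamma: they have the same
   neighbours apart from each other.  Any permutation moving each vertex to a
   twin is a graph symmetry, which gives the first claim.

   For liftability, suppose first that v has a neighbour.  Every lift of a
   vertex c of the class has, over gamma(c), a lift that is its twin in Lambda,
   and choosing these twins gives a graph symmetry of Lambda over gamma.  It is
   injective because two distinct twins in one fibre over a non-isolated vertex
   would be two neighbours of a common vertex lying over the same point, which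
   a covering map forbids.
   If v is isolated, the whole class consists of isolated vertices, whose
   fibres may have different sizes; gamma is then lifted by the automorphism
   u |-> u s(phi u)^-1 s(gamma (phi u)) of A_Lambda on lifts of isolated
   vertices, where s is a section of phi. *)
From Stdlib Require Import Relation_Operators.
From mathcomp Require Import all_boot.
From mathcomp Require Import fingroup perm.
Set Implicit Arguments. Unset Strict Implicit. Unset Printing Implicit Defensive.

Definition twins (T : eqType) (e : rel T) (a b : T) : Prop :=
  forall z, z != a -> z != b -> e a z = e b z.

Definition isolated (T : finType) (e : rel T) (x : T) : bool := [forall y, ~~ e x y].

Section Twins.

Variables (T : finType) (e : rel T).
Hypotheses (e_sym : symmetric e) (e_irr : irreflexive e).

Lemma twins_sym a b : twins e a b -> twins e b a.
Proof. by move=> tw z za zb; rewrite tw. Qed.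

Lemma twins_trans a b c : twins e a b -> twins e b c -> twins e a c.
Proof.
move=> tab tbc z; case: (eqVneq z b) => [->|zb] za zc; last by rewrite tab // tbc.
case: (eqVneq a c) => [<-//|ac].
have eba : e b a = e c a by apply: tbc => //; rewrite eq_sym.
have eac : e a c = e b c by apply: tab => //; rewrite eq_sym.
by rewrite [e a b]e_sym eba [e c a]e_sym eac e_sym.
Qed.

Lemma twins_isolated a b : twins e a b -> isolated e a -> isolated e b.
Proof.
move=> tw /forallP iso; apply/forallP => z.
case: (eqVneq z b) => [->|zb]; first by rewrite e_irr.
case: (eqVneq z a) => [->|za]; first by rewrite e_sym iso.
by rewrite -tw.
Qed.

Lemma twins_graph_sym g : bijective g -> (forall x, twins e x (g x)) -> graph_sym e g.
Proof.
move=> g_bij tw; split=> // x y.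
case: (eqVneq x y) => [->|xy]; first by rewrite !e_irr.
have gxy : g x != g y by rewrite (inj_eq (bij_inj g_bij)).
case: (eqVneq (g x) y) => [gx_y|gx_y].
  case: (eqVneq (g y) x) => [gy_x|gy_x]; first by rewrite gx_y gy_x e_sym.
  have exgy : e x (g y) = e (g x) (g y) by apply: tw => //; rewrite eq_sym.
  have eyx : e y x = e (g y) x by apply: tw => //; rewrite eq_sym.
  by rewrite -exgy e_sym -eyx e_sym.
have eygx : e y (g x) = e (g y) (g x) by apply: tw.
have exy : e x y = e (g x) y by apply: tw => //; rewrite eq_sym.
by rewrite e_sym -eygx e_sym exy.
Qed.

End Twins.

Lemma graph_sym_can (T : finType) (e : rel T) (g h : T -> T) :
  graph_sym e g -> cancel g h -> cancel h g -> graph_sym e h.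
Proof.
move=> [_ g_edge] gK hK; split; first by exists g.
by move=> x y; rewrite -g_edge !hK.
Qed.

Lemma phi_equiv_sym (TL TG : finType) (eL : rel TL) (phi : TL -> TG) x y :
  phi_equiv eL phi x y = phi_equiv eL phi y x.
Proof. exact: andbC. Qed.

Section Covering.

Variables (TL TG : finType) (eL : rel TL) (eG : rel TG) (phi : TL -> TG).
Hypotheses (HL : simple_graph eL) (HG : simple_graph eG) (Hcov : covering eL eG phi).

Lemma phi_le_link x y : phi_le eL phi x y -> forall z, eG x z -> (z == y) || eG y z.
Proof.
case: Hcov => phi_surj phi_edge _ phi_lift le_xy z xz.
have [u phiu] := phi_surj x; subst x.
move/forallP/(_ u)/implyP: le_xy => /(_ (eqxx _)) /existsP [u' /andP [/eqP <- /forallP lk_u]].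
have [w uw <-] := phi_lift u z xz.
by case/orP: (implyP (lk_u w) uw) => [/eqP ->|u'w]; rewrite ?eqxx // phi_edge ?orbT.
Qed.

Lemma phi_equiv_twins x y : phi_equiv eL phi x y -> twins eG x y.
Proof.
move=> /andP [le_xy le_yx] z zx zy; apply/idP/idP => [xz|yz].
  by move: (phi_le_link le_xy xz); rewrite (negbTE zy).
by move: (phi_le_link le_yx yz); rewrite (negbTE zx).
Qed.

Lemma link_sub_star_sym u u' :
  twins eG (phi u) (phi u') -> (forall w, eL u w -> (w == u') || eL u' w) ->
  forall w, eL u' w -> (w == u) || eL u w.
Proof.
case: HL HG Hcov => [symL irrL] [symG irrG] [_ phi_edge phi_inj phi_lift] tw lk_u w u'w.
case: (eqVneq w u) => //= wu.
have [y_u|y_u] := eqVneq (phi w) (phi u).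
  have uu' : eG (phi u) (phi u') by rewrite symG -y_u phi_edge.
  have [w' uw' phiw'] := phi_lift u (phi u') uu'.
  case/orP: (lk_u w' uw') => [/eqP w'u'|u'w'].
    have w_u : w = u by apply: (phi_inj u' w u u'w _ y_u); rewrite symL -w'u'.
    by rewrite w_u eqxx in wu.
  by move: (phi_edge _ _ u'w'); rewrite phiw' irrG.
have y_u' : phi w != phi u' by apply: contraTneq (phi_edge _ _ u'w) => <-; rewrite irrG.
have uw : eG (phi u) (phi w) by rewrite tw // phi_edge.
have [w' uw' phiw'] := phi_lift u (phi w) uw.
case/orP: (lk_u w' uw') => [/eqP w'u'|u'w']; first by rewrite -phiw' w'u' eqxx in y_u'.
by rewrite (phi_inj _ _ _ u'w u'w' (esym phiw')).
Qed.

Lemma twins_lift u u' :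
  twins eG (phi u) (phi u') -> (forall w, eL u w -> (w == u') || eL u' w) ->
  twins eL u u'.
Proof.
move=> tw lk_u z zu zu'; apply/idP/idP => [uz|u'z].
  by move: (lk_u z uz); rewrite (negbTE zu').
by move: (link_sub_star_sym tw lk_u u'z); rewrite (negbTE zu).
Qed.

Lemma phi_equiv_lift x y u :
  phi_equiv eL phi x y -> phi u = x -> exists2 u', phi u' = y & twins eL u u'.
Proof.
move=> xy phiu; have tw := phi_equiv_twins xy.
case/andP: xy => /forallP/(_ u)/implyP; rewrite phiu eqxx => /(_ isT).
case/existsP=> u' /andP [/eqP phiu' /forallP lk_u] _.
exists u' => //; apply: twins_lift; first by rewrite phiu phiu'.
by move=> w; apply/implyP.
Qed.

Lemma fibre_twins_eq u u' :
  phi u = phi u' -> twins eL u u' -> ~~ isolated eG (phi u) -> u = u'.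
Proof.
case: HL HG Hcov => [symL irrL] [_ irrG] [_ phi_edge phi_inj phi_lift] phiuu' tw.
case/forallPn => y /negbNE uy; have [w uw phiw] := phi_lift u y uy.
have wu : w != u by apply: contraTneq uw => ->; rewrite irrL.
have wu' : w != u' by apply: contraTneq uy => w_u'; rewrite -phiw w_u' -phiuu' irrG.
by apply: (phi_inj w); rewrite 1?symL -?tw.
Qed.

End Covering.

Section ExtendPerm.

Variables (TL TG : finType) (eL : rel TL) (phi : TL -> TG) (v : TG).
Implicit Type gv : {perm phi_class eL phi v}.

Local Notation C := (phi_equiv eL phi v).

Lemma extend_perm_val gv (x : phi_class eL phi v) : extend_perm gv (val x) = val (gv x).
Proof. by rewrite /extend_perm valK. Qed.

Lemma extend_perm_out gv w : ~~ C w -> extend_perm gv w = w.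
Proof. by move=> Cw; rewrite /extend_perm insubF //; apply/negbTE. Qed.

Lemma extend_perm_class gv w : C w -> C (extend_perm gv w).
Proof. by move=> Cw; rewrite -(@SubK _ _ (phi_class eL phi v) w Cw) extend_perm_val; apply: valP. Qed.

Lemma extend_permK gv : cancel (extend_perm gv) (extend_perm gv^-1).
Proof.
move=> w; have [Cw|Cw] := boolP (C w); last by rewrite !extend_perm_out.
by rewrite -(@SubK _ _ (phi_class eL phi v) w Cw) !extend_perm_val permK.
Qed.

Lemma extend_permKV gv : cancel (extend_perm gv^-1) (extend_perm gv).
Proof. by have := extend_permK gv^-1; rewrite invgK. Qed.

End ExtendPerm.

Section ExtendPermCovering.

Variables (TL TG : finType) (eL : rel TL) (eG : rel TG) (phi : TL -> TG).
Hypotheses (HL : simple_graph eL) (HG : simple_graph eG) (Hcov : covering eL eG phi).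
Variables (v : TG) (gv : {perm phi_class eL phi v}).

Let symL : symmetric eL := proj1 HL.
Let irrL : irreflexive eL := proj2 HL.
Let symG : symmetric eG := proj1 HG.
Let irrG : irreflexive eG := proj2 HG.

Local Notation C := (phi_equiv eL phi v).
Local Notation g := (extend_perm gv).

Lemma extend_perm_twins x : twins eG x (g x).
Proof.
have [Cx|Cx] := boolP (C x); last by rewrite extend_perm_out.
apply: (@twins_trans _ _ symG x v).
  by apply: (phi_equiv_twins Hcov); rewrite phi_equiv_sym.
by apply: (phi_equiv_twins Hcov); apply: extend_perm_class.
Qed.

Lemma extend_perm_graph_sym : graph_sym eG g.
Proof.
apply: (twins_graph_sym symG irrG) extend_perm_twins.
by exists (extend_perm gv^-1); [apply: extend_permK | apply: extend_permKV].
Qed.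

Lemma extend_perm_fix_nonisolated :
  isolated eG v -> forall x, ~~ isolated eG x -> g x = x.
Proof.
move=> iso_v x; apply: contraNeq => gx_x.
have Cx : C x by apply: contraTT gx_x => /(extend_perm_out gv) ->; rewrite negbK.
exact: (twins_isolated symG irrG (phi_equiv_twins Hcov Cx) iso_v).
Qed.

Lemma extend_perm_lift u :
  exists u', [/\ phi u' = g (phi u), twins eL u u' & ~~ C (phi u) -> u' = u].
Proof.
have [Cu|Cu] := boolP (C (phi u)); last by exists u; rewrite extend_perm_out.
have Cu' : phi_equiv eL phi (phi u) v by rewrite phi_equiv_sym.
have [u1 phiu1 tw1] := phi_equiv_lift HL HG Hcov Cu' erefl.
have [u2 phiu2 tw2] := phi_equiv_lift HL HG Hcov (extend_perm_class gv Cu) phiu1.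
by exists u2; split=> //; exact: (twins_trans symL tw1 tw2).
Qed.

Lemma extend_perm_lift_graph_sym :
  ~~ isolated eG v -> exists2 s, graph_sym eL s & forall u, phi (s u) = g (phi u).
Proof.
move=> niso_v; have [s s_spec] := fin_all_exists extend_perm_lift.
have s_inj : injective s.
  move=> u1 u2 su12; have [phis1 tw1 out1] := s_spec u1; have [phis2 tw2 out2] := s_spec u2.
  have phiu12 : phi u1 = phi u2 by apply: (can_inj (extend_permK gv)); rewrite -phis1 -phis2 su12.
  have [Cu1|Cu1] := boolP (C (phi u1)); last by rewrite -out1 // su12 out2 // -phiu12.
  apply: (fibre_twins_eq HL HG Hcov phiu12).
    by apply: (twins_trans symL tw1); rewrite su12; apply: twins_sym.
  apply: contra niso_v => iso_u1; apply: (twins_isolated symG irrG _ iso_u1).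
  by apply: (phi_equiv_twins Hcov); rewrite phi_equiv_sym.
exists s => [|u]; last by case: (s_spec u).
by apply: (twins_graph_sym symL irrL (injF_bij s_inj)) => u; case: (s_spec u).
Qed.

End ExtendPermCovering.

Lemma wsubst1 (S T : Type) (f : S -> word T) x : wsubst f [:: (x, true)] = f x.
Proof. by rewrite /wsubst /= cats0. Qed.

Lemma raag_eq_free_expand (T : Type) (e : T -> T -> bool) (u w r : word T) x b :
  raag_eq e (u ++ w) r -> raag_eq e (u ++ (x, b) :: (x, ~~ b) :: w) r.
Proof. by apply: rst_trans; apply: rst_step; apply: rs_free. Qed.

Lemma sym_aut_hom (T : Type) (e : rel T) (s : T -> T) :
  {homo s : a b / e a b} -> is_hom e e (sym_aut s).
Proof. by move=> s_edge a b ab; apply: rst_step; apply: (@rs_comm _ _ [::] [::]); apply: s_edge. Qed.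

Lemma graph_sym_raag_aut (T : finType) (e : rel T) (s : T -> T) :
  graph_sym e s -> is_raag_aut e (sym_aut s).
Proof.
move=> s_sym; have [[t sK tK] s_edge] := s_sym.
have [_ t_edge] := graph_sym_can s_sym sK tK.
split; first by apply: sym_aut_hom => a b; rewrite s_edge.
exists (sym_aut t); split; first by apply: sym_aut_hom => a b; rewrite t_edge.
by move=> a; rewrite /sym_aut !wsubst1 sK tK; split; apply: rst_refl.
Qed.

Lemma graph_sym_lift_liftable (TL TG : finType) (eL : rel TL) (eG : rel TG)
  (phi : TL -> TG) (s : TL -> TL) (g : TG -> TG) :
  graph_sym eL s -> (forall u, phi (s u) = g (phi u)) -> liftable eL eG phi (sym_aut g).
Proof.
move=> s_sym s_lift; exists (sym_aut s); split; first exact: graph_sym_raag_aut.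
by move=> u; rewrite /induced_hom /sym_aut !wsubst1 s_lift; apply: rst_refl.
Qed.

Section IsolatedLift.

Variables (TL TG : finType) (eL : rel TL) (eG : rel TG) (phi : TL -> TG) (b : TG -> TL).
Hypotheses (symG : symmetric eG) (phi_edge : forall u w, eL u w -> eG (phi u) (phi w)).
Hypothesis bK : cancel b phi.

Definition isolated_lift (k : TG -> TG) (u : TL) : word TL :=
  if isolated eG (phi u) then [:: (u, true); (b (phi u), false); (b (k (phi u)), true)]
  else [:: (u, true)].

Lemma isolated_lift_hom k : is_hom eL eL (isolated_lift k).
Proof.
have niso x y : eG x y -> isolated eG x = false.
  by move=> xy; apply/negbTE/forallPn; exists y; rewrite negbK.
move=> u w uw; have wu : eG (phi w) (phi u) by rewrite symG phi_edge.
rewrite /isolated_lift (niso _ _ (phi_edge uw)) (niso _ _ wu).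
by apply: rst_step; apply: (@rs_comm _ _ [::] [::]).
Qed.

Lemma isolated_liftK k k' :
  (forall x, isolated eG x -> isolated eG (k x)) -> cancel k k' ->
  forall a, raag_eq eL (wsubst (isolated_lift k') (isolated_lift k a)) [:: (a, true)].
Proof.
move=> k_iso kK a; rewrite /isolated_lift.
have [iso_a|niso_a] := boolP (isolated eG (phi a)); last first.
  by rewrite wsubst1 (negbTE niso_a); apply: rst_refl.
rewrite /wsubst /= !bK kK iso_a (k_iso _ iso_a) /=.
apply: (@raag_eq_free_expand _ _ [:: (a, true); (b (phi a), false)] _ _ _ true).
apply: (@raag_eq_free_expand _ _ [:: (a, true)] _ _ _ false).
apply: (@raag_eq_free_expand _ _ [:: (a, true); (b (phi a), false)] _ _ _ true).
apply: (@raag_eq_free_expand _ _ [:: (a, true)] _ _ _ false).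
exact: rst_refl.
Qed.

End IsolatedLift.

Lemma isolated_perm_liftable (TL TG : finType) (eL : rel TL) (eG : rel TG) (phi : TL -> TG)
  (g h : TG -> TG) :
  symmetric eG -> covering eL eG phi -> cancel g h -> cancel h g ->
  (forall x, ~~ isolated eG x -> g x = x) -> liftable eL eG phi (sym_aut g).
Proof.
move=> symG [phi_surj phi_edge _ _] gK hK g_fix.
have [b bK] := fin_all_exists phi_surj.
have h_fix x : ~~ isolated eG x -> h x = x by move=> nx; rewrite -{1}(g_fix x nx) gK.
have iso_stable k k' : cancel k k' -> (forall x, ~~ isolated eG x -> k' x = x) ->
    forall x, isolated eG x -> isolated eG (k x).
  by move=> kK k'_fix x; apply: contraTT => nkx; have := k'_fix _ nkx; rewrite kK => ->.
exists (isolated_lift eG phi b g); split.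
  split; first exact: isolated_lift_hom.
  exists (isolated_lift eG phi b h); split; first exact: isolated_lift_hom.
  by move=> a; split; apply: isolated_liftK => //; apply: iso_stable.
move=> u; rewrite /induced_hom /sym_aut wsubst1 /isolated_lift.
have [iso_u|niso_u] := boolP (isolated eG (phi u)); last first.
  by rewrite wsubst1 g_fix //; apply: rst_refl.
rewrite /wsubst /= !bK; apply: rst_sym.
by apply: (@raag_eq_free_expand _ _ [::] _ _ _ true); apply: rst_refl.
Qed.

Theorem lemma4p1 (TL TG : finType) (eL : rel TL) (eG : rel TG) (phi : TL -> TG)
  (HL : simple_graph eL) (HG : simple_graph eG)
  (Hcov : covering eL eG phi) (Hreg : regular_covering eL phi)
  (v : TG) (gv : {perm phi_class eL phi v}) :
  graph_sym eG (extend_perm gv) /\ liftable eL eG phi (sym_aut (extend_perm gv)).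
Proof.
split; first exact: extend_perm_graph_sym.
have [iso_v|niso_v] := boolP (isolated eG v).
  apply: (isolated_perm_liftable HG.1 Hcov (extend_permK gv) (extend_permKV gv)).
  exact: extend_perm_fix_nonisolated.
have [s s_sym s_lift] := extend_perm_lift_graph_sym HL HG Hcov gv niso_v.
exact: graph_sym_lift_liftable s_sym s_lift.
Qed.
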